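(* Let $\mathcal{R}$ be a cell space, let $A\subseteq M$, let $e\in G/G_0$, and let $E,E'\subseteq G/G_0$. Then: (1) $A^{-\{G_0\}}=A$, $A^{+\{G_0\}}=A$, and $\partial_{\{G_0\}}A=\emptyset$. (2) $A^{-\{G_0,e\}}=A\cap(\cdot\triangleleft e)^{-1}(A)$, $A^{+\{G_0,e\}}=A\cup(\cdot\triangleleft e)^{-1}(A)$, and $\partial_{\{G_0,e\}}A=(A\setminus(\cdot\triangleleft e)^{-1}(A))\cup((\cdot\triangleleft e)^{-1}(A)\setminus A)$. (3) $(M\setminus A)^{-E}=M\setminus A^{+E}$ and $(M\setminus A)^{+E}=M\setminus A^{-E}$. (4) If $E\subseteq E'$, then $A^{-E}\supseteq A^{-E'}$, $A^{+E}\subseteq A^{+E'}$, and $\partial_E A\subseteq\partial_{E'}A$. (5) If $G_0\in E$, then $A^{-E}\subseteq A\subseteq A^{+E}$. (6) If $G_0\in E$ and $A$ is finite, then $A^{-E}$ is finite. (7) If $G_0$, $A$ and $E$ are finite, then $A^{+E}$ and $\partial_E A$ are finite; more precisely $|A^{+E}|\leq|G_0|\cdot|A|\cdot|E|$. (8) If $g\in G$ and $G_0\cdot E\subseteq E$, then $g\triangleright A^{-E}=(g\triangleright A)^{-E}$, $g\triangleright A^{+E}=(g\triangleright A)^{+E}$, and $g\triangleright\partial_E A=\partial_E(g\triangleright A)$. (9) If $m\in M$, $G_0\cdot E\subseteq E$, and $\iota\colon M\to G/G_0$, $m'\mapsto G_{m_0,m'}$, then $m\triangleleft\iota(A^{-E})=(m\triangleleft\iota(A))^{-E}$,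 $m\triangleleft\iota(A^{+E})=(m\triangleleft\iota(A))^{+E}$, and $m\triangleleft\iota(\partial_E A)=\partial_E(m\triangleleft\iota(A))$.
   Context: A cell space $\mathcal{R}$ consists of a group $G$ acting transitively on the left on a nonempty set $M$ via $\triangleright$, a point $m_0\in M$ and a family $(g_{m_0,m})_{m\in M}$ in $G$ with $g_{m_0,m}\triangleright m_0=m$. $G_0$ is the stabiliser of $m_0$, $G/G_0$ the set of left cosets, with $G$ acting by $g\cdot hG_0=ghG_0$ (so $G_0\cdot E=\{g_0\cdot e:g_0\in G_0,e\in E\}$). For $m,m'\in M$, $G_{m_0,m'}=\{g\in G: g\triangleright m_0=m'\}$ (a left coset of $G_0$). The right semi-action $\triangleleft\colon M\times G/G_0\to M$ is $m\triangleleft gG_0=g_{m_0,m}g\triangleright m_0$; for $E\subseteq G/G_0$, $m\triangleleft E=\{m\triangleleft e:e\in E\}$, $(\cdot\triangleleft e)^{-1}(A)=\{m\in M: m\triangleleft e\in A\}$, and $g\triangleright A=\{g\triangleright a:a\in A\}$. For $A\subseteq M$ and $E\subseteq G/G_0$: $A^{-E}=\{m\in M: m\triangleleft E\subseteq A\}$, $A^{+E}=\{m\in M:(m\triangleleft E)\cap A\neq\emptyset\}$, $\partial_E A=A^{+E}\setminus A^{-E}$. *)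

From HB Require Import structures.
From mathcomp Require Import all_boot monoid.
From mathcomp Require Import finmap boolp classical_sets cardinality.
Set Implicit Arguments. Unset Strict Implicit. Unset Printing Implicit Defensive.
Local Open Scope classical_set_scope.
Local Open Scope group_scope.

Record cell_space (G : groupType) := CellSpace {
  cs_M : Type;
  cs_act : G -> cs_M -> cs_M;
  cs_act1 : forall m, cs_act 1 m = m;
  cs_actM : forall g h m, cs_act (g * h) m = cs_act g (cs_act h m);
  cs_transitive : forall m m', exists g, cs_act g m = m';
  cs_m0 : cs_M;
  cs_gsel : cs_M -> G;
  cs_gselP : forall m, cs_act (cs_gsel m) cs_m0 = m
}.

Section CellSpaceDefs.
Variables (G : groupType) (R : cell_space G).
Local Notation M := (@cs_M G R).
Local Notation act := (@cs_act G R).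
Local Notation m0 := (@cs_m0 G R).

Definition stab : set G := [set g | act g m0 = m0].

Definition lcoset (g : G) : set G := [set g * h | h in stab].

Definition coset := {C : set G | exists g, C = lcoset g}.

Definition coset_of (g : G) : coset := exist _ (lcoset g) (ex_intro _ g erefl).

Lemma stab_coset : exists g, stab = lcoset g.
Proof.
exists 1; apply/seteqP; split => x /=.
  by move=> hx; exists x => //; rewrite mul1g.
by case=> h hh <-; rewrite mul1g.
Qed.
Definition G0 : coset := exist _ stab stab_coset.

Definition crep (C : coset) : G := projT1 (cid (proj2_sig C)).

Lemma cact_proof (g : G) (C : coset) :
  exists h, (fun x => g * x) @` sval C = lcoset h.
Proof.
case: C => C /= [h hC]; exists (g * h); rewrite hC.
apply/seteqP; split => x /=.
  by case=> y [k kS <-] <-; exists k => //; rewrite mulgA.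
by case=> k kS <-; exists (h * k); [exists k | rewrite mulgA].
Qed.
Definition cact (g : G) (C : coset) : coset :=
  exist _ ((fun x => g * x) @` sval C) (cact_proof g C).

Definition G0act (E : set coset) : set coset :=
  [set cact g0 e | g0 in stab & e in E].

Definition Gmm (m' : M) : set G := [set g | act g m0 = m'].
Lemma Gmm_coset (m' : M) : exists g, Gmm m' = lcoset g.
Proof.
exists (@cs_gsel G R m'); rewrite /Gmm /lcoset /stab; apply/seteqP; split => x /=.
  move=> hx; exists ((@cs_gsel G R m')^-1 * x).
    rewrite cs_actM hx -[in X in _ X = _](@cs_gselP G R m') -cs_actM.
    by rewrite mulVg cs_act1.
  by rewrite mulgA mulgV mul1g.
by case=> h hh <-; rewrite cs_actM hh cs_gselP.
Qed.
Definition cs_iota (m' : M) : coset := exist _ (Gmm m') (Gmm_coset m').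

(* right semi-action m <| g G_0 = g_{m0,m} g |> m0 (independent of the
   representative g since G_0 fixes m0) *)
Definition rsemi (m : M) (C : coset) : M := act (@cs_gsel G R m * crep C) m0.

Definition rpre (e : coset) (A : set M) : set M := [set m | A (rsemi m e)].

Definition rsemiset (m : M) (E : set coset) : set M := rsemi m @` E.

Definition actset (g : G) (A : set M) : set M := act g @` A.

Definition interiorE (E : set coset) (A : set M) : set M :=
  [set m | rsemiset m E `<=` A].
Definition closureE (E : set coset) (A : set M) : set M :=
  [set m | rsemiset m E `&` A !=set0].
Definition boundaryE (E : set coset) (A : set M) : set M :=
  closureE E A `\` interiorE E A.

End CellSpaceDefs.

Definition ncard (T : Type) (A : set T) : nat :=
  #|` fset_set (A : set {classic T}) |.

Set Warnings "-notation-overridden,-notation-incompatible-prefix".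
From mathcomp Require Import all_boot monoid.
From mathcomp Require Import finmap boolp classical_sets cardinality.
Local Open Scope classical_set_scope.

(* Changing the representative g of e multiplies g_{m0,m} g on the right by
   an element of G_0, which fixes m0; so m <| e is well defined and
   m <| G_0 = m.  For k in G, k g_{m0,m} = g_{m0,k m} h with h in G_0, hence
   k (m <| e) = (k m) <| (h . e).  When G_0 . E is contained in E, k thus maps
   the family (m <| e)_{e in E} into (k m <| e)_{e in E} (and k^-1 maps it
   back), which makes interior, closure and boundary equivariant. *)

Lemma ncard_le_seq {T : Type} {B : set T} {s : seq {classic T}} :
  (forall u, B u -> (u : {classic T}) \in s) ->
  finite_set B /\ (ncard B <= size s)%N.
Proof.
move=> Bs; have fB : finite_set B.
  by apply: (@sub_finite_set _ _ [set` s]); [exact: Bs | apply/finite_seqP; exists s].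
split=> //; rewrite /ncard.
apply: leq_trans (fsubset_leq_card (_ : fset_set (B : set {classic T}) `<=` [fset u in s])%fset) _.
  by apply/fsubsetP => u; rewrite in_fset_set // !inE => /Bs.
by rewrite card_fseq size_undup.
Qed.

Lemma mem_enum_fset_set {T : Type} {S : set T} {x : T} :
  finite_set S -> S x -> (x : {classic T}) \in enum_fset (fset_set (S : set {classic T})).
Proof.
move=> fS Sx; change ((x : {classic T}) \in fset_set (S : set {classic T})).
by rewrite (in_fset_set (T := {classic T})) //; exact: mem_set.
Qed.

Lemma ncard_le_image3 {T1 T2 T3 U : Type} (F : T1 -> T2 -> T3 -> U)
    {S1 : set T1} {S2 : set T2} {S3 : set T3} {B : set U} :
  finite_set S1 -> finite_set S2 -> finite_set S3 ->
  (forall u, B u -> exists x y z, [/\ S1 x, S2 y, S3 z & u = F x y z]) ->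
  finite_set B /\ (ncard B <= ncard S1 * ncard S2 * ncard S3)%N.
Proof.
move=> fS1 fS2 fS3 cover.
pose s1 := enum_fset (fset_set (S1 : set {classic T1})).
pose s2 := enum_fset (fset_set (S2 : set {classic T2})).
pose s3 := enum_fset (fset_set (S3 : set {classic T3})).
pose s23 := [seq (y, z) | y <- s2, z <- s3].
pose F' (x : {classic T1}) (p : {classic T2} * {classic T3}) : {classic U} := F x p.1 p.2.
have /ncard_le_seq : forall u, B u -> (u : {classic U}) \in [seq F' x p | x <- s1, p <- s23].
  move=> u /cover [x [y [z [S1x S2y S3z ->]]]].
  apply/allpairsP; exists (x, (y, z)); split=> //=; first exact: mem_enum_fset_set.
  by apply/allpairsP; exists (y, z); split=> //=; exact: mem_enum_fset_set.
by rewrite !size_allpairs mulnA.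
Qed.

Local Open Scope group_scope.

Section CellSpaceTheory.
Context {G : groupType} {R : cell_space G}.
Local Notation M := (cs_M R).
Local Notation act := (@cs_act G R).
Local Notation m0 := (cs_m0 R).
Local Notation gsel := (@cs_gsel G R).

Lemma cs_actK g m : act g^-1 (act g m) = m.
Proof. by rewrite -cs_actM mulVg cs_act1. Qed.

Lemma cs_actKV g m : act g (act g^-1 m) = m.
Proof. by rewrite -cs_actM mulgV cs_act1. Qed.

Lemma crepP (C : coset R) : sval C = lcoset R (crep C).
Proof. by rewrite /crep; case: cid. Qed.

Lemma crep_mem (C : coset R) : sval C (crep C).
Proof. by rewrite crepP; exists 1; rewrite ?mulg1 // /stab /= cs_act1. Qed.

Lemma rsemiE (C : coset R) g m : sval C g -> rsemi m C = act (gsel m * g) m0.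
Proof. by rewrite crepP => -[h Sh <-]; rewrite /rsemi mulgA !cs_actM Sh. Qed.

Lemma rsemi_G0 m : rsemi m (G0 R) = m.
Proof. by rewrite (@rsemiE _ 1) ?mulg1 ?cs_gselP //= /stab /= cs_act1. Qed.

Lemma rsemi_iota m a : rsemi m (@cs_iota G R a) = act (gsel m) a.
Proof. by rewrite (@rsemiE _ (gsel a)) ?cs_actM ?cs_gselP //= /Gmm /= cs_gselP. Qed.

Lemma act_rsemi k x :
  exists2 h, stab R h & forall e, act k (rsemi x e) = rsemi (act k x) (cact h e).
Proof.
pose h := (gsel (act k x))^-1 * (k * gsel x).
exists h => [|e]; first by rewrite /stab /= !cs_actM cs_gselP -{2}(cs_gselP (act k x)) cs_actK.
rewrite (@rsemiE (cact h e) (h * crep e)); first by rewrite /rsemi /h -cs_actM !mulgA mulgV mul1g.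
by exists (crep e); first exact: crep_mem.
Qed.

Lemma act_rsemi_stable {E : set (coset R)} {e : coset R} k x : G0act E `<=` E -> E e ->
  exists2 e', E e' & act k (rsemi x e) = rsemi (act k x) e'.
Proof.
move=> sE Ee; have [h Sh hK] := act_rsemi k x.
by exists (cact h e) => //; apply: sE; exists h => //; exists e.
Qed.

Lemma interiorEP (E : set (coset R)) (A : set M) x :
  interiorE E A x <-> forall e, E e -> A (rsemi x e).
Proof. by split=> [int e Ee | int _ [e Ee <-]]; [apply: int; exists e | apply: int]. Qed.

Lemma closureEP (E : set (coset R)) (A : set M) x :
  closureE E A x <-> exists2 e, E e & A (rsemi x e).
Proof.
split=> [[_ [[e Ee <-] Ae]] | [e Ee Ae]]; first by exists e.
by exists (rsemi x e); split=> //; exists e.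
Qed.

Section Neighbourhoods.
Context {E : set (coset R)} {A : set M}.

Lemma closureEC : closureE E (~` A) = ~` interiorE E A.
Proof.
apply/seteqP; split=> x.
  by move=> /closureEP[e Ee nAe] /interiorEP/(_ e Ee).
move=> nint; apply/closureEP; apply: contrapT => nclo; apply/nint/interiorEP => e Ee.
by apply: contrapT => nAe; apply: nclo; exists e.
Qed.

Lemma interiorEC : interiorE E (~` A) = ~` closureE E A.
Proof.
apply/seteqP; split=> x.
  by move=> /interiorEP int /closureEP[e Ee]; apply: int.
by move=> nclo; apply/interiorEP => e Ee Ae; apply: nclo; apply/closureEP; exists e.
Qed.

Lemma interiorE_subset : E (G0 R) -> interiorE E A `<=` A.
Proof. by move=> E0 x /interiorEP/(_ _ E0); rewrite rsemi_G0. Qed.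

Lemma subset_closureE : E (G0 R) -> A `<=` closureE E A.
Proof. by move=> E0 x Ax; apply/closureEP; exists (G0 R); rewrite ?rsemi_G0. Qed.

Lemma finite_interiorE : E (G0 R) -> finite_set A -> finite_set (interiorE E A).
Proof. by move=> E0; apply: sub_finite_set; exact: interiorE_subset. Qed.

(* A point u of the closure is g_{m0,a} h g_e^{-1} |> m0 with a = u <| e in A,
   g_e the representative of e in E and h = g_{m0,a}^{-1} g_{m0,u} g_e in G_0. *)
Lemma ncard_closureE : finite_set (stab R) -> finite_set A -> finite_set E ->
  finite_set (closureE E A) /\
  (ncard (closureE E A) <= ncard (stab R) * ncard A * ncard E)%N.
Proof.
move=> fS fA fE.
apply: (ncard_le_image3 (fun h a e => act (gsel a * h * (crep e)^-1) m0) fS fA fE).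
move=> u /closureEP[e Ee Ae]; set a := rsemi u e.
exists ((gsel a)^-1 * (gsel u * crep e)), a, e; split=> //.
  by rewrite /stab /= cs_actM -/(rsemi u e) -/a -{2}(cs_gselP a) cs_actK.
by rewrite mulVKg mulgK cs_gselP.
Qed.

End Neighbourhoods.

Lemma interiorE_set1 e (A : set M) : interiorE [set e] A = rpre e A.
Proof.
apply/seteqP; split=> x; first by move/interiorEP; apply.
by move=> Ax; apply/interiorEP => _ ->.
Qed.

Lemma closureE_set1 e (A : set M) : closureE [set e] A = rpre e A.
Proof.
apply/seteqP; split=> x; first by move=> /closureEP[_ -> ].
by move=> Ax; apply/closureEP; exists e.
Qed.

Lemma interiorE_setU (E E' : set (coset R)) (A : set M) :
  interiorE (E `|` E') A = interiorE E A `&` interiorE E' A.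
Proof.
apply/seteqP; split=> x.
  by move/interiorEP => int; split; apply/interiorEP => e Ee; apply: int; [left | right].
by move=> [/interiorEP int /interiorEP int']; apply/interiorEP => e [/int|/int'].
Qed.

Lemma closureE_setU (E E' : set (coset R)) (A : set M) :
  closureE (E `|` E') A = closureE E A `|` closureE E' A.
Proof.
apply/seteqP; split=> x.
  by move=> /closureEP[e [Ee|Ee] Ae]; [left | right]; apply/closureEP; exists e.
by move=> [|] /closureEP[e Ee Ae]; apply/closureEP; exists e => //; [left | right].
Qed.

Lemma rpre_G0 (A : set M) : rpre (G0 R) A = A.
Proof. by apply/seteqP; split=> x; rewrite /rpre /= rsemi_G0. Qed.

Section Monotonicity.
Variables (E E' : set (coset R)) (A : set M).
Hypothesis sEE' : E `<=` E'.

Lemma interiorES : interiorE E' A `<=` interiorE E A.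
Proof. by move=> x /interiorEP int; apply/interiorEP => e /sEE'; apply: int. Qed.

Lemma closureES : closureE E A `<=` closureE E' A.
Proof. by move=> x /closureEP[e Ee Ae]; apply/closureEP; exists e; first exact: sEE'. Qed.

Lemma boundaryES : boundaryE E A `<=` boundaryE E' A.
Proof. by move=> x [clo nint]; split; [exact: closureES | by move/interiorES]. Qed.

End Monotonicity.

Section Equivariance.
Variables (E : set (coset R)) (g : G).
Hypothesis sE : G0act E `<=` E.

Lemma closureE_preimage (A : set M) :
  closureE E (act g @^-1` A) = act g @^-1` closureE E A.
Proof.
apply/seteqP; split=> x /=.
  move=> /closureEP[e Ee Ae]; apply/closureEP.
  by have [e' Ee' eE] := act_rsemi_stable g x sE Ee; exists e'; rewrite // -eE.
move=> /closureEP[e Ee Ae]; apply/closureEP.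
have [e' Ee' e'E] := act_rsemi_stable g^-1 (act g x) sE Ee.
by exists e' => //=; rewrite -[x](cs_actK g) -e'E cs_actKV.
Qed.

Lemma interiorE_preimage (A : set M) :
  interiorE E (act g @^-1` A) = act g @^-1` interiorE E A.
Proof.
by rewrite -[A]setCK -preimage_setC !interiorEC closureE_preimage preimage_setC.
Qed.

Lemma boundaryE_preimage (A : set M) :
  boundaryE E (act g @^-1` A) = act g @^-1` boundaryE E A.
Proof.
by rewrite /boundaryE closureE_preimage interiorE_preimage !setDE preimage_setI preimage_setC.
Qed.

End Equivariance.

Lemma actsetE g (S : set M) : actset g S = act g^-1 @^-1` S.
Proof.
apply/seteqP; split=> [y [x Sx <-] | y Sy] /=; first by rewrite cs_actK.
by exists (act g^-1 y); rewrite ?cs_actKV.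
Qed.

Lemma rsemiset_iota m (S : set M) : rsemiset m (@cs_iota G R @` S) = actset (gsel m) S.
Proof.
apply/seteqP; split=> [_ [_ [a Sa <-] <-] | _ [a Sa <-]].
  by exists a; rewrite ?rsemi_iota.
by exists (@cs_iota G R a); [exists a | exact: rsemi_iota].
Qed.

Lemma actset_neighbourhoods (E : set (coset R)) (A : set M) g : G0act E `<=` E ->
  [/\ actset g (interiorE E A) = interiorE E (actset g A),
      actset g (closureE E A) = closureE E (actset g A)
    & actset g (boundaryE E A) = boundaryE E (actset g A)].
Proof.
by move=> sE; rewrite !actsetE interiorE_preimage // closureE_preimage // boundaryE_preimage.
Qed.

End CellSpaceTheory.

Local Close Scope group_scope.

Theorem lemma1 (G : groupType) (R : cell_space G) (A : set (cs_M R))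
    (e : coset R) (E E' : set (coset R)) :
  (* (1) *)
  [/\ interiorE [set G0 R] A = A, closureE [set G0 R] A = A
    & boundaryE [set G0 R] A = set0] /\
  (* (2) *)
  [/\ interiorE ([set G0 R] `|` [set e]) A = A `&` rpre e A,
      closureE ([set G0 R] `|` [set e]) A = A `|` rpre e A
    & boundaryE ([set G0 R] `|` [set e]) A
        = (A `\` rpre e A) `|` (rpre e A `\` A)] /\
  (* (3) *)
  (interiorE E (~` A) = ~` closureE E A /\ closureE E (~` A) = ~` interiorE E A) /\
  (* (4) *)
  (E `<=` E' ->
    [/\ interiorE E' A `<=` interiorE E A, closureE E A `<=` closureE E' A
      & boundaryE E A `<=` boundaryE E' A]) /\
  (* (5) *)
  (E (G0 R) -> interiorE E A `<=` A /\ A `<=` closureE E A) /\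
  (* (6) *)
  (E (G0 R) -> finite_set A -> finite_set (interiorE E A)) /\
  (* (7) *)
  (finite_set (stab R) -> finite_set A -> finite_set E ->
    [/\ finite_set (closureE E A), finite_set (boundaryE E A)
      & (ncard (closureE E A) <= ncard (stab R) * ncard A * ncard E)%N]) /\
  (* (8) *)
  (forall g : G, G0act E `<=` E ->
    [/\ actset g (interiorE E A) = interiorE E (actset g A),
        actset g (closureE E A) = closureE E (actset g A)
      & actset g (boundaryE E A) = boundaryE E (actset g A)]) /\
  (* (9) *)
  (forall m : cs_M R, G0act E `<=` E ->
    [/\ rsemiset m (@cs_iota G R @` interiorE E A)
          = interiorE E (rsemiset m (@cs_iota G R @` A)),
        rsemiset m (@cs_iota G R @` closureE E A)
          = closureE E (rsemiset m (@cs_iota G R @` A))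
      & rsemiset m (@cs_iota G R @` boundaryE E A)
          = boundaryE E (rsemiset m (@cs_iota G R @` A))]).
Proof.
have int_G0 := interiorE_set1 (G0 R) A; have clo_G0 := closureE_set1 (G0 R) A.
rewrite rpre_G0 in int_G0 clo_G0.
split; first by rewrite /boundaryE int_G0 clo_G0 setDv.
split.
  rewrite /boundaryE interiorE_setU closureE_setU int_G0 clo_G0.
  rewrite interiorE_set1 closureE_set1 setDIr !setDUl !setDv set0U setU0.
  by split=> //; rewrite setUC.
split; first by rewrite interiorEC closureEC.
split; first by move=> sEE'; split; [exact: interiorES | exact: closureES | exact: boundaryES].
split; first by move=> E0; split; [exact: interiorE_subset | exact: subset_closureE].
split; first exact: finite_interiorE.
split.
  move=> fS fA fE; have [fclo ncard_clo] := ncard_closureE fS fA fE.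
  by split=> //; apply: sub_finite_set fclo => x [].
split; first by move=> g; exact: actset_neighbourhoods.
by move=> m sE; rewrite !rsemiset_iota; exact: actset_neighbourhoods.
Qed.
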